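(* Let $k\ge2$, let $A=\{a_1,\dots,a_n\}$ be a sorted multiset of positive integers ($a_1\le\dots\le a_n$), let $p$ be an integer with $1\le p\le n-k+1$, and let $\varepsilon\in(0,1)$. Set $\delta=\frac{\varepsilon\cdot a_p}{3n}$ and $a_i^r=\lfloor a_i/\delta\rfloor$ for $i\in[n]$, $A_r=\{a_1^r,\dots,a_n^r\}$. Let $(S_1,\dots,S_k)$ be an optimal solution of the $k$-SSR$_R$ instance $(A_r,p)$ (this is the output of the algorithm that rounds $A$ to $A_r$ and solves $(A_r,p)$ exactly), and let $(S_1^*,\dots,S_k^* )$ be an optimal solution of the $k$-SSR$_R$ instance $(A,p)$. Then $$\mathcal{R}(S_1,\dots,S_k,A)\le(1+\varepsilon)\cdot\mathcal{R}(S_1^*,\dots,S_k^*,A).$$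
   Context: $[n]=\{1,\dots,n\}$; elements of sets are indices. For a multiset $B=\{b_1,\dots,b_n\}$ of nonnegative integers and $S\subseteq[n]$, $\Sigma(S,B)=\sum_{i\in S}b_i$; for pairwise disjoint $S_1,\dots,S_k\subseteq[n]$, $\mathcal{R}(S_1,\dots,S_k,B)=\max_i\Sigma(S_i,B)/\min_i\Sigma(S_i,B)$ if the minimum is positive and $+\infty$ otherwise. The $k$-SSR$_R$ instance $(B,p)$ (with $b_1\le\dots\le b_n$, $1\le p\le n-k+1$): find pairwise disjoint $S_1,\dots,S_k\subseteq[n]$ with $\max(S_1)=p$ and $\max(S_i)>p$ for $1<i\le k$ minimizing $\mathcal{R}(S_1,\dots,S_k,B)$. *)

From HB Require Import structures.
From mathcomp Require Import all_boot all_order all_algebra.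
Set Implicit Arguments. Unset Strict Implicit. Unset Printing Implicit Defensive.
Import Order.TTheory GRing.Theory Num.Theory.

(* Conventions.
   - A multiset B = {b_1,...,b_n} is a function B : nat -> nat, used on the
     indices 1..n (values outside [1,n] are irrelevant).
   - A subset S of [n] is a finite set S : {set 'I_n}; the ordinal i : 'I_n
     stands for the index i.+1 in [n] = {1,...,n}.
   - A k-tuple (S_1,...,S_k) is S : 'I_k -> {set 'I_n}; S_1 is the part of
     ordinal value 0, S_j is the part of ordinal value j-1.
   - Ratios take values in an archimedean real field R; +infinity is
     represented by None (type option R). *)

Section SSR.
Variable R : archiRealFieldType.
Local Open Scope ring_scope.

Definition Sigma (n : nat) (S : {set 'I_n}) (B : nat -> nat) : nat :=
  (\sum_(i in S) B i.+1)%N.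

(* max(S) for S a subset of [n] (1-based); equals 0 only when S is empty *)
Definition setmax (n : nat) (S : {set 'I_n}) : nat :=
  (\max_(i in S) i.+1)%N.

Definition maxSigma (n k : nat) (S : 'I_k -> {set 'I_n}) (B : nat -> nat) : nat :=
  (\max_(j < k) Sigma (S j) B)%N.

(* min_i Sigma(S_i, B) (correct for k >= 1) *)
Definition minSigma (n k : nat) (S : 'I_k -> {set 'I_n}) (B : nat -> nat) : nat :=
  (\big[minn/maxSigma S B]_(j < k) Sigma (S j) B)%N.

Definition ratioR (n k : nat) (S : 'I_k -> {set 'I_n}) (B : nat -> nat)
  : option R :=
  if (0 < minSigma S B)%N
  then Some ((maxSigma S B)%:R / (minSigma S B)%:R)
  else None.

Definition ext_le (x y : option R) : bool :=
  match x, y with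
  | _, None => true
  | None, Some _ => false
  | Some a, Some b => a <= b
  end.

Definition ext_scale (c : R) (x : option R) : option R :=
  match x with
  | Some a => Some (c * a)
  | None => None
  end.

Definition sorted_ms (n : nat) (B : nat -> nat) : Prop :=
  forall i j, (1 <= i)%N -> (i <= j)%N -> (j <= n)%N -> (B i <= B j)%N.

Definition feasible (n k : nat) (p : nat) (S : 'I_k -> {set 'I_n}) : Prop :=
  (forall j1 j2 : 'I_k, j1 != j2 -> [disjoint S j1 & S j2]) /\
  (forall j : 'I_k, val j = 0%N -> setmax (S j) = p) /\
  (forall j : 'I_k, val j <> 0%N -> (p < setmax (S j))%N).

Definition optimal (n k : nat) (B : nat -> nat) (p : nat)
  (S : 'I_k -> {set 'I_n}) : Prop :=
  feasible p S /\
  forall T : 'I_k -> {set 'I_n}, feasible p T -> ext_le (ratioR S B) (ratioR T B).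

End SSR.

From HB Require Import structures.
From mathcomp Require Import all_boot all_order all_algebra.
From mathcomp Require Import ring lra zify.
Import Order.TTheory GRing.Theory Num.Theory.
Set Implicit Arguments. Unset Strict Implicit. Unset Printing Implicit Defensive.

(* Rounding a_i down to a multiple of delta changes every part sum by at most
   n * delta = eps * a_p / 3, while every part of a feasible solution
   contains an index >= p, so its sum is at least a_p.  Hence, at scale delta,
   the sums over A_r approximate those over A within relative error eps / 3,
   for the maximum and the minimum alike.  This yields
   R(S, A) <= R(S, A_r) + eps / 3 and R(S*, A_r) * (1 - eps / 3) <= R(S*, A);
   optimality of S for A_r links the two, and since R(S*, A) >= 1,
   1 / (1 - eps / 3) + eps / 3 <= 1 + eps concludes. *)

Section Extrema.
Variables (n k : nat) (T : 'I_k -> {set 'I_n}) (B : nat -> nat).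

Lemma leq_maxSigma j : (Sigma (T j) B <= maxSigma T B)%N.
Proof. exact: (@bigop.leq_bigmax _ (fun j => Sigma (T j) B)). Qed.

Lemma geq_minSigma j : (minSigma T B <= Sigma (T j) B)%N.
Proof. by rewrite /minSigma -minEnat -leEnat bigmin_le. Qed.

Lemma minSigma_le_maxSigma : (minSigma T B <= maxSigma T B)%N.
Proof.
apply: (big_ind (fun x => x <= maxSigma T B)%N) => // [x y hx _ | j _].
  by rewrite geq_min hx.
exact: leq_maxSigma.
Qed.

Lemma maxSigma_attained : (0 < k)%N -> exists j, maxSigma T B = Sigma (T j) B.
Proof.
move=> k_gt0; rewrite /maxSigma.
have [|j ->] := @bigop.eq_bigmax _ (fun j => Sigma (T j) B); last by exists j.
by rewrite card_ord.
Qed.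

Lemma minSigma_attained : (0 < k)%N -> exists j, minSigma T B = Sigma (T j) B.
Proof.
move=> k_gt0; apply: (big_ind (fun x => exists j, x = Sigma (T j) B)).
- exact: maxSigma_attained.
- by move=> _ _ [i ->] [j ->]; rewrite /minn; case: ifP; eauto.
- by move=> j _; exists j.
Qed.

End Extrema.

Lemma setmax_attained n (S : {set 'I_n}) :
  (0 < setmax S)%N -> exists2 i, i \in S & setmax S = i.+1.
Proof.
rewrite /setmax; have [/eqP|S_gt0 _] := posnP #|S|.
  by rewrite cards_eq0 => /eqP ->; rewrite big_set0.
by have [i] := @bigop.eq_bigmax_cond _ (mem S) (fun i : 'I_n => i.+1) S_gt0; exists i.
Qed.

Lemma feasible_setmax_ge n k p (T : 'I_k -> {set 'I_n}) j :
  feasible p T -> (p <= setmax (T j))%N.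
Proof.
move=> [_ [max_first max_other]].
have [/max_first -> // | j_neq0] := eqVneq (val j) 0%N.
exact/ltnW/max_other/eqP.
Qed.

Lemma feasible_Sigma_ge n k (A : nat -> nat) p (T : 'I_k -> {set 'I_n}) j :
  sorted_ms n A -> (0 < p)%N -> feasible p T -> (A p <= Sigma (T j) A)%N.
Proof.
move=> sortedA p_gt0 /(feasible_setmax_ge j) p_le.
have [i i_in max_eq] := setmax_attained (leq_trans p_gt0 p_le).
rewrite /Sigma (bigD1 i) //=; apply: leq_trans (leq_addr _ _).
by apply: sortedA; rewrite // -max_eq.
Qed.

Lemma feasible_minSigma_ge n k (A : nat -> nat) p (T : 'I_k -> {set 'I_n}) :
  (0 < k)%N -> sorted_ms n A -> (0 < p)%N -> feasible p T ->
  (A p <= minSigma T A)%N.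
Proof.
move=> k_gt0 sortedA p_gt0 feasT.
by have [j ->] := minSigma_attained T A k_gt0; apply: feasible_Sigma_ge.
Qed.

Local Open Scope ring_scope.

Section ExtremaApprox.
Variables (R : realFieldType) (n k : nat) (T : 'I_k -> {set 'I_n}).
Variables (B C : nat -> nat) (d e : R).
Hypotheses (k_gt0 : (0 < k)%N) (d_ge0 : 0 <= d).
Hypothesis approxBC : forall j,
  d * (Sigma (T j) C)%:R <= (Sigma (T j) B)%:R <= d * (Sigma (T j) C)%:R + e.

Let ler_dnat (x y : nat) : (x <= y)%N -> d * x%:R <= d * y%:R.
Proof. by move=> le_xy; rewrite ler_wpM2l // ler_nat. Qed.

Lemma maxSigma_approx :
  d * (maxSigma T C)%:R <= (maxSigma T B)%:R <= d * (maxSigma T C)%:R + e.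
Proof.
have [jC eqC] := maxSigma_attained T C k_gt0.
have [jB eqB] := maxSigma_attained T B k_gt0.
have /andP[le_jC _] := approxBC jC; have /andP[_ le_jB] := approxBC jB.
apply/andP; split.
  by rewrite eqC; apply: le_trans le_jC _; rewrite ler_nat leq_maxSigma.
by rewrite eqB; apply: le_trans le_jB _; rewrite lerD2r ler_dnat ?leq_maxSigma.
Qed.

Lemma minSigma_approx :
  d * (minSigma T C)%:R <= (minSigma T B)%:R <= d * (minSigma T C)%:R + e.
Proof.
have [jC eqC] := minSigma_attained T C k_gt0.
have [jB eqB] := minSigma_attained T B k_gt0.
have /andP[_ le_jC] := approxBC jC; have /andP[le_jB _] := approxBC jB.
apply/andP; split.
  by rewrite eqB; apply: le_trans le_jB; rewrite ler_dnat ?geq_minSigma.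
by rewrite eqC; apply: le_trans le_jC; rewrite ler_nat geq_minSigma.
Qed.

End ExtremaApprox.

Section Truncation.
Variables (R : archiRealFieldType) (d : R).
Hypothesis d_gt0 : 0 < d.

Lemma truncn_div_approx (x : nat) :
  d * (Num.truncn (x%:R / d))%:R <= x%:R <= d * (Num.truncn (x%:R / d))%:R + d.
Proof.
have /andP[lb ub] := truncn_itv (divr_ge0 (ler0n R x) (ltW d_gt0)).
rewrite -natr1 in ub.
rewrite [d * _]mulrC -ler_pdivlMr // lb /=.
by rewrite -[d in _ + d]mul1r -mulrDl -ler_pdivrMr // ltW.
Qed.

Lemma Sigma_truncn_approx n (S : {set 'I_n}) (A : nat -> nat) :
  let Ad i := Num.truncn ((A i)%:R / d) in
  d * (Sigma S Ad)%:R <= (Sigma S A)%:R <= d * (Sigma S Ad)%:R + n%:R * d.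
Proof.
rewrite /Sigma !natr_sum mulr_sumr; apply/andP; split.
  by apply: ler_sum => i _; have /andP[] := truncn_div_approx (A i.+1).
apply: le_trans (_ : _ <= \sum_(i in S) (d * (Num.truncn ((A i.+1)%:R / d))%:R + d)) _.
  by apply: ler_sum => i _; have /andP[] := truncn_div_approx (A i.+1).
rewrite big_split /= lerD2l sumr_const mulr_natl ler_wpMn2l ?ltW //.
by apply: leq_trans (max_card _) _; rewrite card_ord.
Qed.

End Truncation.

Section RatioBounds.
Variable R : realFieldType.
Implicit Types M m Mr mr d x : R.

Lemma ratio_le_rounded_ratio M m Mr mr d x :
  0 < mr -> 0 < m -> 0 <= Mr -> d * mr <= m -> M <= d * Mr + x * m ->
  M / m <= Mr / mr + x.
Proof.
move=> mr_gt0 m_gt0 Mr_ge0 le_m le_M; rewrite ler_pdivrMr //.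
set r := Mr / mr; have r_ge0 : 0 <= r by rewrite divr_ge0 // ltW.
have Mr_eq : Mr = r * mr by rewrite divfK ?gt_eqF.
rewrite Mr_eq in le_M; nra.
Qed.

Lemma rounded_ratio_le_ratio M m Mr mr d x :
  0 < mr -> 0 < m -> 0 <= Mr -> d * Mr <= M -> m <= d * mr + x * m ->
  Mr / mr * (1 - x) <= M / m.
Proof.
move=> mr_gt0 m_gt0 Mr_ge0 le_M le_m; rewrite ler_pdivlMr //.
set r := Mr / mr; have r_ge0 : 0 <= r by rewrite divr_ge0 // ltW.
have Mr_eq : Mr = r * mr by rewrite divfK ?gt_eqF.
rewrite Mr_eq in le_M; nra.
Qed.

Lemma ratio_chain_le r r0 rs (eps : R) :
  0 < eps -> eps < 1 -> 1 <= rs -> r <= r0 + eps / 3 -> r0 * (1 - eps / 3) <= rs ->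
  r <= (1 + eps) * rs.
Proof.
move=> eps_gt0 eps_lt1 rs_ge1 le_r le_r0.
have : eps * (2 - eps) <= rs * (eps * (2 - eps)).
  by rewrite ler_pMl ?mulr_gt0 ?subr_gt0; lra.
nra.
Qed.

End RatioBounds.

Section SigmaRatio.
Variables (R : archiRealFieldType) (n k : nat).
Variables (T : 'I_k -> {set 'I_n}) (B : nat -> nat).

Definition sigma_ratio : R := (maxSigma T B)%:R / (minSigma T B)%:R.

Hypothesis minSigma_gt0 : (0 < minSigma T B)%N.

Lemma ratioR_pos : ratioR R T B = Some sigma_ratio.
Proof. by rewrite /ratioR minSigma_gt0. Qed.

Lemma sigma_ratio_ge1 : 1 <= sigma_ratio.
Proof. by rewrite ler_pdivlMr ?ltr0n // mul1r ler_nat minSigma_le_maxSigma. Qed.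

End SigmaRatio.

Section Rounding.
Variables (R : archiRealFieldType) (n k p : nat) (A : nat -> nat) (eps : R).
Hypotheses (k_gt0 : (0 < k)%N) (p_gt0 : (0 < p)%N) (p_le_n : (p <= n)%N).
Hypotheses (A_gt0 : forall i, (1 <= i)%N -> (i <= n)%N -> (0 < A i)%N).
Hypothesis sortedA : sorted_ms n A.
Hypotheses (eps_gt0 : 0 < eps) (eps_lt1 : eps < 1).

Let delta : R := eps * (A p)%:R / (3 * n)%:R.
Let Ar i := Num.truncn ((A i)%:R / delta).

Let Ap_gt0 : 0 < (A p)%:R :> R.
Proof. by rewrite ltr0n A_gt0. Qed.

Let delta_gt0 : 0 < delta.
Proof. by rewrite /delta !mulr_gt0 // invr_gt0 ltr0n muln_gt0 /= (leq_trans p_gt0). Qed.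

Let n_delta : n%:R * delta = eps / 3 * (A p)%:R.
Proof. by rewrite /delta natrM; field; rewrite pnatr_eq0 -lt0n (leq_trans p_gt0). Qed.

Variables (T : 'I_k -> {set 'I_n}).
Hypothesis feasT : feasible p T.

Let Ap_le_minSigma : (A p)%:R <= (minSigma T A)%:R :> R.
Proof. by rewrite ler_nat feasible_minSigma_ge. Qed.

Let Sigma_rounding j :
  delta * (Sigma (T j) Ar)%:R <= (Sigma (T j) A)%:R
    <= delta * (Sigma (T j) Ar)%:R + eps / 3 * (minSigma T A)%:R.
Proof.
have /andP[-> le_up] := Sigma_truncn_approx delta_gt0 (T j) A.
apply: le_trans le_up _; apply: lerD; first exact: lexx.
by rewrite n_delta; apply: ler_wpM2l Ap_le_minSigma; rewrite divr_ge0 ?ler0n ?ltW.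
Qed.

Lemma maxSigma_rounding :
  delta * (maxSigma T Ar)%:R <= (maxSigma T A)%:R
    <= delta * (maxSigma T Ar)%:R + eps / 3 * (minSigma T A)%:R.
Proof. exact/maxSigma_approx/Sigma_rounding/ltW. Qed.

Lemma minSigma_rounding :
  delta * (minSigma T Ar)%:R <= (minSigma T A)%:R
    <= delta * (minSigma T Ar)%:R + eps / 3 * (minSigma T A)%:R.
Proof. exact/minSigma_approx/Sigma_rounding/ltW. Qed.

Lemma minSigma_rounded_gt0 : (0 < minSigma T Ar)%N.
Proof.
have /andP[_ le_m] := minSigma_rounding.
rewrite -(ltr0n R) -(pmulr_rgt0 _ delta_gt0).
(* nra ignores section hypotheses and [Let]s, hence the [have]s. *)
have := eps_lt1; have := Ap_le_minSigma; have := Ap_gt0; nra.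
Qed.

Lemma sigma_ratio_le_rounded :
  sigma_ratio R T A <= sigma_ratio R T Ar + eps / 3.
Proof.
have /andP[_ le_M] := maxSigma_rounding; have /andP[le_m _] := minSigma_rounding.
apply: ratio_le_rounded_ratio le_m le_M => //.
- by rewrite ltr0n minSigma_rounded_gt0.
- exact: lt_le_trans Ap_le_minSigma.
Qed.

Lemma rounded_le_sigma_ratio :
  sigma_ratio R T Ar * (1 - eps / 3) <= sigma_ratio R T A.
Proof.
have /andP[le_M _] := maxSigma_rounding; have /andP[_ le_m] := minSigma_rounding.
apply: rounded_ratio_le_ratio le_M le_m => //.
- by rewrite ltr0n minSigma_rounded_gt0.
- exact: lt_le_trans Ap_le_minSigma.
Qed.

Lemma rounding_ratio_bounds :
  [/\ (0 < minSigma T Ar)%N,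
      sigma_ratio R T A <= sigma_ratio R T Ar + eps / 3 &
      sigma_ratio R T Ar * (1 - eps / 3) <= sigma_ratio R T A].
Proof.
by split; [exact: minSigma_rounded_gt0 | exact: sigma_ratio_le_rounded
  | exact: rounded_le_sigma_ratio].
Qed.

End Rounding.

Theorem theorem14 (R : archiRealFieldType) (n k : nat) (A : nat -> nat) (p : nat)
  (eps : R)
  (hk : (2 <= k)%N)
  (hApos : forall i, (1 <= i)%N -> (i <= n)%N -> (0 < A i)%N)
  (hAsorted : sorted_ms n A)
  (hp1 : (1 <= p)%N) (hp2 : (p + k <= n + 1)%N)
  (heps0 : 0 < eps) (heps1 : eps < 1)
  (S Sstar : 'I_k -> {set 'I_n}) :
  let delta : R := eps * (A p)%:R / (3 * n)%:R in
  let Ar : nat -> nat := fun i => Num.truncn ((A i)%:R / delta) in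
  optimal R Ar p S ->
  optimal R A p Sstar ->
  ext_le (ratioR R S A) (ext_scale (1 + eps) (ratioR R Sstar A)).
Proof.
have scale_ge0 : 0 <= 1 - eps / 3 by lra.
move=> delta Ar [feasS optS] [feasSstar _].
have k_gt0 : (0 < k)%N by apply: leq_trans hk.
have p_le_n : (p <= n)%N by lia.
have minSigma_gt0 (T : 'I_k -> {set 'I_n}) :
    feasible p T -> (0 < minSigma T A)%N.
  move=> /(feasible_minSigma_ge k_gt0 hAsorted hp1).
  exact: leq_trans (hApos p hp1 p_le_n).
have bounds := rounding_ratio_bounds k_gt0 hp1 p_le_n hApos hAsorted heps0 heps1.
have [mrS_gt0 le_rS _] := bounds S feasS.
have [mrSstar_gt0 _ le_rSstar] := bounds Sstar feasSstar.
have := optS Sstar feasSstar.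
rewrite (ratioR_pos R mrS_gt0) (ratioR_pos R mrSstar_gt0) /= => opt_rounded.
have mSstar_gt0 := minSigma_gt0 Sstar feasSstar.
rewrite (ratioR_pos R (minSigma_gt0 S feasS)) (ratioR_pos R mSstar_gt0) /=.
apply: ratio_chain_le heps0 heps1 (sigma_ratio_ge1 R mSstar_gt0) le_rS _.
exact: le_trans (ler_wpM2r scale_ge0 opt_rounded) le_rSstar.
Qed.
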